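(* Let $n\ge1$, $\tau>0$ and $\mathbf{s}=[s_1,\dots,s_n]^T\in\mathbb{R}^n$ (entries not necessarily distinct). Let $\widehat{P}\in\mathbb{R}^{n\times n}$ be defined by $$\widehat{P}[i,j]=\frac{\exp\big(((n+1-2i)s_j-\sum_{k=1}^n|s_j-s_k|)/\tau\big)}{\sum_{l=1}^n\exp\big(((n+1-2i)s_l-\sum_{k=1}^n|s_l-s_k|)/\tau\big)}.$$ Define $z_1,\dots,z_n$ recursively as follows: for row $i$, let $M_i=\{j: \widehat{P}[i,j]=\max_{j'}\widehat{P}[i,j']\}$; if some $j\in M_i$ is not among $z_1,\dots,z_{i-1}$, let $z_i$ be the smallest such $j$; otherwise let $z_i$ be the smallest element of $M_i$. Then $\mathbf{z}=[z_1,\dots,z_n]^T$ is a permutation of $\{1,\dots,n\}$. *)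

From mathcomp Require Import all_boot all_order all_algebra.
From mathcomp Require Import reals sequences exp.
Set Implicit Arguments. Unset Strict Implicit. Unset Printing Implicit Defensive.
Import Order.TTheory GRing.Theory Num.Theory.
Local Open Scope ring_scope.

Section Defs.
Variables (R : realType) (n : nat) (tau : R) (s : 'I_n -> R).

(* Indices are 0-based: row i : 'I_n corresponds to the paper's row i+1,
   so (n + 1 - 2(i+1)) = n - 1 - 2 i. *)
Definition score (i j : 'I_n) : R :=
  ((n%:R + 1 - 2 * (i.+1)%:R) * s j - \sum_(k < n) `|s j - s k|) / tau.

Definition Phat (i j : 'I_n) : R :=
  expR (score i j) / \sum_(l < n) expR (score i l).

Definition Mset (i : 'I_n) : pred 'I_n :=
  [pred j | [forall j', Phat i j' <= Phat i j]].

(* enum 'I_n is increasing, so the head of a filtered enum is the smallest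
   element of the filter. *)
Definition choose_z (i : 'I_n) (prev : seq 'I_n) : 'I_n :=
  let M := [seq j <- enum 'I_n | Mset i j] in
  match [seq j <- M | j \notin prev] with
  | j :: _ => j
  | [::] => head i M
  end.

Fixpoint zseq (k : nat) : seq 'I_n :=
  match k with
  | 0 => [::]
  | k'.+1 =>
      let p := zseq k' in
      match insub k' with
      | Some i => rcons p (choose_z i p)
      | None => p
      end
  end.

Definition z (i : 'I_n) : 'I_n := nth i (zseq n) i.

End Defs.

From mathcomp Require Import all_boot all_order all_algebra.
From mathcomp Require Import reals sequences exp.
From mathcomp Require Import lra zify.
Import Order.TTheory GRing.Theory Num.Theory.
Local Open Scope ring_scope.

(* Up to the positive factor [1/tau] and the monotone softmax, row [i] (0-based)
   of [Phat] is the function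
     f_i(x) = (n - 1 - 2i) x - \sum_k |x - s_k|
   sampled at the entries of [s].  Between two consecutive entries f_i is affine
   with slope 2 #{k | s_k > x} - 2i - 1, so f_i is maximal exactly at the entries
   v with #{k | s_k > v} <= i < #{k | s_k >= v}: the maximisers of row i are the
   indices carrying the (i+1)-th largest entry.  A value v occurring m times is
   thereby the maximum of exactly m consecutive rows, so the greedy choice of z
   always finds a maximiser that has not been used yet, and z is injective. *)

Lemma exists_notin_of_count_lt {T : finType} (P : pred T) {p : seq T} :
  uniq p -> (count P p < #|P|)%N -> exists2 x, P x & x \notin p.
Proof.
move=> p_uniq count_lt; apply/exists_inP; move: count_lt; apply: contraTT.
move=> /exists_inPn all_in; rewrite -leqNgt.
rewrite -size_filter -(card_uniqP (filter_uniq P p_uniq)).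
apply/subset_leq_card/subsetP => x Px.
by rewrite mem_filter (negPn (all_in x Px)) andbT.
Qed.

Section GreedyMaximisers.
Set Implicit Arguments. Unset Strict Implicit.
Context {R : realType} {n : nat} {tau : R} (s : 'I_n -> R) (tau_gt0 : 0 < tau).

Definition score_at (i : 'I_n) (x : R) : R :=
  (n%:R + 1 - 2 * (i.+1)%:R) * x - \sum_(k < n) `|x - s k|.

Definition n_gt (v : R) : nat := #|[pred k | v < s k]|.
Definition n_ge (v : R) : nat := #|[pred k | v <= s k]|.

Lemma ler_Phat (i j j' : 'I_n) :
  (Phat tau s i j <= Phat tau s i j') = (score_at i (s j) <= score_at i (s j')).
Proof.
have sum_gt0 : 0 < \sum_(l < n) expR (score tau s i l).
  rewrite (bigD1 j) //= ltr_pwDl ?expR_gt0 // sumr_ge0 // => l _.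
  exact/ltW/expR_gt0.
by rewrite ler_pM2r ?invr_gt0 // ler_expR ler_pM2r ?invr_gt0.
Qed.

Lemma MsetP (i j : 'I_n) :
  reflect (forall j', score_at i (s j') <= score_at i (s j)) (Mset tau s i j).
Proof.
by apply: (iffP forallP) => max_j j'; have := max_j j'; rewrite ler_Phat.
Qed.

Lemma Mset_exists (i : 'I_n) : exists j, Mset tau s i j.
Proof.
case: (arg_maxP (Phat tau s i) (isT : predT i)) => j _ max_j.
by exists j; apply/forallP => j'; apply: max_j.
Qed.

Lemma Mset_same_value (i j j' : 'I_n) :
  s j = s j' -> Mset tau s i j -> Mset tau s i j'.
Proof. by move=> sjj' /MsetP max_j; apply/MsetP; rewrite -sjj'. Qed.

Lemma distB_outside (a b x : R) : a < b -> ~~ (a < x < b) ->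
  `|b - x| - `|a - x| = if a < x then a - b else b - a.
Proof.
move=> ab; case: ifP => [ax|/negbT]; rewrite ?ax /= -?leNgt => xb.
  by rewrite !ler0_norm ?subr_le0 ?(ltW ax) //; lra.
by rewrite !ger0_norm ?subr_ge0 //; lra.
Qed.

Lemma score_atB (i : 'I_n) (a b : R) :
  a < b -> (forall k, ~~ (a < s k < b)) ->
  score_at i b - score_at i a = (b - a) * ((n_gt a).*2%:R - (i.*2.+1)%:R).
Proof.
move=> ab gap.
have n_split : n = (n_gt a + #|[predC [pred k | (a < s k)%R]]|)%N.
  by rewrite /n_gt cardC card_ord.
have dist_sum : \sum_(k < n) `|b - s k| - \sum_(k < n) `|a - s k| =
    (n_gt a)%:R * (a - b) + #|[predC [pred k | a < s k]]|%:R * (b - a).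
  rewrite -sumrB (eq_bigr _ (fun k _ => distB_outside ab (gap k))).
  rewrite (bigID [pred k | a < s k]) /=.
  rewrite (eq_bigr (fun _ => a - b)) => [|k ->] //.
  rewrite [X in _ + X](eq_bigr (fun _ => b - a)) => [|k /negbTE ->] //.
  by rewrite !sumr_const !mulr_natl; congr (_ *+ _ + _ *+ _); apply: eq_card.
rewrite /score_at; move: dist_sum; rewrite [in n%:R]n_split.
rewrite !natrD -!muln2 !natrM; lra.
Qed.

Lemma exists_next_above (v : R) : (0 < n_gt v)%N ->
  exists w, v < s w /\ forall k, ~~ (v < s k < s w).
Proof.
case/card_gt0P => k0 /[!inE] v_k0.
case: (@arg_minP _ _ _ k0 (fun k => v < s k) s v_k0) => w v_w min_w.
exists w; split=> // k.
by apply/negP => /andP[/min_w /= + k_w]; rewrite leNgt k_w.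
Qed.

Lemma exists_next_below (v : R) : (n_ge v < n)%N ->
  exists u, s u < v /\ forall k, ~~ (s u < s k < v).
Proof.
move=> ge_lt_n; case: (pickP [pred k | s k < v]) => [k0 /= k0_v | /= none_below].
  case: (@arg_maxP _ _ _ k0 (fun k => s k < v) s k0_v) => u u_v max_u.
  exists u; split=> // k.
  by apply/negP => /andP[u_k /max_u /=]; rewrite leNgt u_k.
suff : n_ge v = n by lia.
rewrite -[RHS]card_ord; apply: eq_card => k.
by rewrite !inE leNgt; have /= -> := none_below k.
Qed.

Lemma n_gt_next_below (u v : R) : u < v -> (forall k, ~~ (u < s k < v)) ->
  n_gt u = n_ge v.
Proof.
move=> uv gap; apply: eq_card => k /[!inE].
apply/idP/idP => [u_k | /(lt_le_trans uv) //].
by move: (gap k); rewrite u_k /= -leNgt.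
Qed.

Lemma Mset_n_gt_le (i j : 'I_n) : Mset tau s i j -> (n_gt (s j) <= i)%N.
Proof.
move=> /MsetP max_j; rewrite leqNgt; apply/negP => i_lt.
have [w [j_w gap]] := exists_next_above (leq_ltn_trans (leq0n i) i_lt).
have slope_gt0 : 0 < (n_gt (s j)).*2%:R - (i.*2.+1)%:R :> R.
  by rewrite subr_gt0 ltr_nat; lia.
have : 0 < (s w - s j) * ((n_gt (s j)).*2%:R - (i.*2.+1)%:R).
  by rewrite pmulr_rgt0 // subr_gt0.
have := score_atB i j_w gap; have := max_j w; lra.
Qed.

Lemma Mset_lt_n_ge (i j : 'I_n) : Mset tau s i j -> (i < n_ge (s j))%N.
Proof.
move=> /MsetP max_j; rewrite ltnNge; apply/negP => ge_le_i.
have [u [u_j gap]] := exists_next_below (leq_ltn_trans ge_le_i (ltn_ord i)).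
have slope_lt0 : (n_ge (s j)).*2%:R - (i.*2.+1)%:R < 0 :> R.
  by rewrite subr_lt0 ltr_nat; lia.
have : (s j - s u) * ((n_ge (s j)).*2%:R - (i.*2.+1)%:R) < 0.
  by rewrite pmulr_rlt0 // subr_gt0.
rewrite -(n_gt_next_below u_j gap).
have := score_atB i u_j gap; have := max_j u; lra.
Qed.

Lemma n_geE (v : R) : n_ge v = (#|[pred k | s k == v]| + n_gt v)%N.
Proof.
rewrite /n_ge -(cardID [pred k | v < s k]) addnC.
by congr addn; apply: eq_card => k; rewrite !inE; case: ltgtP.
Qed.

Lemma choose_zP (i : 'I_n) (p : seq 'I_n) :
  (exists2 j, Mset tau s i j & j \notin p) ->
  Mset tau s i (choose_z tau s i p) && (choose_z tau s i p \notin p).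
Proof.
move=> [j M_j j_p]; rewrite /choose_z /=.
have : j \in [seq k <- [seq k <- enum 'I_n | Mset tau s i k] | k \notin p].
  by rewrite !mem_filter j_p M_j -enumT mem_enum.
case fresh : [seq k <- _ | _] => [//|c l] _.
have : c \in [seq k <- [seq k <- enum 'I_n | Mset tau s i k] | k \notin p].
  by rewrite fresh mem_head.
by rewrite !mem_filter => /andP[-> /andP[-> _]].
Qed.

Lemma choose_z_fresh (i : 'I_n) (p : seq 'I_n) : uniq p ->
  (forall v, count [pred j | s j == v] p <= i - n_gt v)%N ->
  Mset tau s i (choose_z tau s i p) && (choose_z tau s i p \notin p).
Proof.
move=> p_uniq few_used; apply: choose_zP.
have [j0 M_j0] := Mset_exists i.
have [j /eqP j0_j j_p] : exists2 j, s j == s j0 & j \notin p.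
  apply: (exists_notin_of_count_lt [pred k | s k == s j0] p_uniq).
  apply: leq_ltn_trans (few_used (s j0)) _.
  by rewrite ltn_subLR ?Mset_n_gt_le // addnC -n_geE Mset_lt_n_ge.
by exists j; first exact: Mset_same_value (esym j0_j) M_j0.
Qed.

Lemma zseq_invariant (k : nat) : (k <= n)%N ->
  [/\ size (zseq tau s k) = k, uniq (zseq tau s k) &
      forall v, count [pred j | s j == v] (zseq tau s k) <= k - n_gt v]%N.
Proof.
elim: k => [|k IHk] k_le_n /=; first by split=> // v; rewrite sub0n.
have [size_z uniq_z few_used] := IHk (ltnW k_le_n).
case: insubP => [i _ val_i|]; last by rewrite k_le_n.
move: val_i => /= val_i; subst k.
have /andP[M_c c_fresh] := choose_z_fresh uniq_z few_used.
have c_rank := Mset_n_gt_le M_c.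
split; first by rewrite size_rcons size_z.
  by rewrite rcons_uniq c_fresh uniq_z.
move=> v; rewrite -cats1 count_cat /= addn0.
by have := few_used v; case: eqVneq => [<-|_] /=; lia.
Qed.

End GreedyMaximisers.

Theorem proposition2 (R : realType) (n : nat) (hn : (1 <= n)%N)
  (tau : R) (htau : 0 < tau) (s : 'I_n -> R) :
  bijective (z tau s).
Proof.
have [size_z uniq_z _] := zseq_invariant s htau (leqnn n).
apply: injF_bij => i1 i2; rewrite /z (set_nth_default i1 i2) ?size_z //.
by move/eqP; rewrite nth_uniq ?size_z // => /eqP/val_inj.
Qed.
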